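(* Let $F(x,y)=(f(x,y),x,y)$ be a germ at $o=(0,0)$ of a $C^3$ map into $\mathbf{R}^3_1$ with $f(0,0)=0$, $f_x(0,0)=0$, $f_y(0,0)=1$, such that the set $\{B_F\neq 0\}$ is open and dense in the domain and $A_F-\varphi B_F^2\equiv0$ for some $C^1$ function germ $\varphi$ at $o$. Then the light-like point $o$ is not an isolated point of the set of light-like points $\{B_F=0\}$.
   Context: $\mathbf{R}^3_1$ is Lorentz–Minkowski 3-space with coordinates $(t,x,y)$ and inner product $-dt^2+dx^2+dy^2$. $B_F:=1-f_x^2-f_y^2$, $A_F:=(1-f_x^2)f_{yy}+2f_xf_yf_{xy}+(1-f_y^2)f_{xx}$. A point $p$ is light-like if $B_F(p)=0$. *)

From Stdlib Require Import Reals.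
From Coquelicot Require Import Coquelicot.
Open Scope R_scope.

Definition dx (f : R -> R -> R) : R -> R -> R :=
  fun x y => Derive (fun t => f t y) x.
Definition dy (f : R -> R -> R) : R -> R -> R :=
  fun x y => Derive (fun t => f x t) y.

Definition open2 (U : R -> R -> Prop) : Prop :=
  forall x y, U x y -> exists eps, 0 < eps /\
    forall x' y', Rabs (x' - x) < eps -> Rabs (y' - y) < eps -> U x' y'.

Definition Ck_on (k : nat) (f : R -> R -> R) (U : R -> R -> Prop) : Prop :=
  forall x y, U x y -> ex_diff_n f k x y.

Definition BF (f : R -> R -> R) : R -> R -> R :=
  fun x y => 1 - (dx f x y)^2 - (dy f x y)^2.

Definition AF (f : R -> R -> R) : R -> R -> R :=
  fun x y =>
    (1 - (dx f x y)^2) * dy (dy f) x y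
    + 2 * dx f x y * dy f x y * dy (dx f) x y
    + (1 - (dy f x y)^2) * dx (dx f) x y.

Definition open_in2 (U S : R -> R -> Prop) : Prop :=
  forall x y, U x y -> S x y -> exists eps, 0 < eps /\
    forall x' y', U x' y' -> Rabs (x' - x) < eps -> Rabs (y' - y) < eps -> S x' y'.

Definition dense_in2 (U S : R -> R -> Prop) : Prop :=
  forall x y, U x y -> forall eps, 0 < eps -> exists x' y',
    U x' y' /\ S x' y' /\ Rabs (x' - x) < eps /\ Rabs (y' - y) < eps.

From Stdlib Require Import Reals Lra Lia Psatz.
From Coquelicot Require Import Coquelicot.
Open Scope R_scope.

(* Let t |-> (X t, t) be an integral curve of the line field (f_x / f_y, 1), i.e. of grad f,
   through o, and b t := B_F (X t, t).  Differentiating, b' = -(2 / f_y) (A_F - (f_xx + f_yy) B_F),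
   so the hypothesis A_F = phi B_F^2 gives b' = b k with k bounded near o.  As b 0 = B_F o = 0,
   Gronwall's argument forces b = 0: the whole curve consists of light-like points.  The curve
   is produced by Picard iteration, after clipping the line field to a square around o on which
   it is bounded and Lipschitz. *)

Lemma Rabs_le_segment a b z r :
  Rmin a b <= z <= Rmax a b -> Rabs a <= r -> Rabs b <= r -> Rabs z <= r.
Proof.
  intros Hz Ha Hb. apply Rabs_le.
  apply Rabs_le_between in Ha. apply Rabs_le_between in Hb.
  unfold Rmin, Rmax in Hz. destruct (Rle_dec a b); lra.
Qed.

Lemma Rabs_lt_segment a b z r :
  Rmin a b <= z <= Rmax a b -> Rabs a < r -> Rabs b < r -> Rabs z < r.
Proof.
  intros Hz Ha Hb. apply Rabs_def2 in Ha. apply Rabs_def2 in Hb. apply Rabs_def1;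
  unfold Rmin, Rmax in Hz; destruct (Rle_dec a b); lra.
Qed.

Lemma is_lim_seq_half_pow C : is_lim_seq (fun n => C * (/2)^n) 0.
Proof.
  replace (Finite 0) with (Rbar_mult C 0) by (simpl; f_equal; ring).
  apply is_lim_seq_scal_l, is_lim_seq_geom. rewrite Rabs_pos_eq; lra.
Qed.

Lemma le_0_of_le_half_pow a C : (forall n, a <= C * (/2)^n) -> a <= 0.
Proof.
  intros Ha.
  exact (is_lim_seq_le (fun _ => a) _ a 0 Ha (is_lim_seq_const a) (is_lim_seq_half_pow C)).
Qed.

Lemma Lim_seq_half_pow_error (u : nat -> R) C :
  (forall n m, (n <= m)%nat -> Rabs (u m - u n) <= C * (/2)^n) ->
  forall n, Rabs (real (Lim_seq u) - u n) <= C * (/2)^n.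
Proof.
  intros Hu n.
  assert (Hcauchy : ex_lim_seq_cauchy u).
  { intros eps.
    destruct (proj2 (is_lim_seq_spec _ _) (is_lim_seq_half_pow C) eps) as [N HN].
    exists N. intros p q Hp Hq.
    assert (Hsmall : forall k, (N <= k)%nat -> C * (/2)^k < eps).
    { intros k Hk. specialize (HN k Hk). rewrite Rminus_0_r in HN.
      eapply Rle_lt_trans; [apply RRle_abs | exact HN]. }
    destruct (Nat.le_ge_cases p q) as [Hpq | Hqp].
    - rewrite Rabs_minus_sym. eapply Rle_lt_trans; [apply Hu, Hpq | apply Hsmall, Hp].
    - eapply Rle_lt_trans; [apply Hu, Hqp | apply Hsmall, Hq]. }
  destruct (proj2 (ex_lim_seq_cauchy_corr u) Hcauchy) as [l Hl].
  rewrite (is_lim_seq_unique _ _ Hl).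
  apply (is_lim_seq_le_loc (fun m => Rabs (u m - u n)) (fun _ => C * (/2)^n)
           (Rabs (l - u n)) (C * (/2)^n)).
  - exists n. apply Hu.
  - apply (is_lim_seq_abs _ (l - u n)), is_lim_seq_minus'; [exact Hl | apply is_lim_seq_const].
  - apply is_lim_seq_const.
Qed.

Lemma Rmult_lt_of_lt_div a r e : 0 < a -> r < e / a -> a * r < e.
Proof.
  intros Ha Hr. apply (Rmult_lt_compat_l a) in Hr; [| exact Ha].
  replace (a * (e / a)) with e in Hr by (field; lra). exact Hr.
Qed.

Lemma continuous_of_lipschitz_near (g : R -> R) K r t : 0 < r ->
  (forall t', Rabs (t' - t) < r -> Rabs (g t' - g t) <= K * Rabs (t' - t)) ->
  continuous g t.
Proof.
  intros Hr Hg. apply continuity_pt_filterlim. intros eps Heps.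
  assert (HK : 0 < Rabs K + 1) by (pose proof (Rabs_pos K); lra).
  exists (Rmin r (eps / (Rabs K + 1))).
  split; [apply Rmin_pos; [exact Hr | apply Rdiv_lt_0_compat; assumption] |].
  intros t' [_ Ht']. simpl in Ht'. unfold R_dist in Ht'.
  pose proof (Rmin_l r (eps / (Rabs K + 1))). pose proof (Rmin_r r (eps / (Rabs K + 1))).
  assert (Hsmall : (Rabs K + 1) * Rabs (t' - t) < eps) by (apply Rmult_lt_of_lt_div; lra).
  eapply Rle_lt_trans; [apply Hg; lra |].
  pose proof (RRle_abs K). pose proof (Rabs_pos (t' - t)). nra.
Qed.

Lemma continuous_comp_graph (H : R -> R -> R) (g : R -> R) t :
  continuity_2d_pt H (g t) t -> continuous g t -> continuous (fun u => H (g u) u) t.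
Proof.
  intros HH Hg. apply (continuous_comp_2 g (fun u => u) H); [exact Hg | apply continuous_id |].
  apply continuity_2d_pt_filterlim, HH.
Qed.

Lemma RInt_sub_0 (f : R -> R) a b : (forall c d, ex_RInt f c d) ->
  RInt f 0 a - RInt f 0 b = RInt f b a.
Proof.
  intros Hf. rewrite <- (RInt_Chasles f b 0 a), <- (opp_RInt_swap f 0 b) by apply Hf.
  unfold plus, opp; simpl. ring.
Qed.

Lemma norm_R (x : R) : norm x = Rabs x.
Proof. reflexivity. Qed.

Section Picard.

Variable H : R -> R -> R.
Variables M L s : R.
Hypothesis s_pos : 0 < s.
Hypothesis Ls_le : L * s <= / 2.
Hypothesis H_bounded : forall x t, Rabs (H x t) <= M.
Hypothesis H_lipschitz : forall x1 x2 t, Rabs (H x1 t - H x2 t) <= L * Rabs (x1 - x2).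
Hypothesis H_continuous : forall x t, continuity_2d_pt H x t.

Let M_nonneg : 0 <= M := Rle_trans _ _ _ (Rabs_pos _) (H_bounded 0 0).

Let L_nonneg : 0 <= L.
Proof.
  pose proof (H_lipschitz 1 0 0) as H10. rewrite Rminus_0_r, Rabs_R1, Rmult_1_r in H10.
  pose proof (Rabs_pos (H 1 0 - H 0 0)). lra.
Qed.

Let ex_RInt_comp (g : R -> R) a b :
  (forall u, Rmin a b <= u <= Rmax a b -> continuous g u) ->
  ex_RInt (fun u => H (g u) u) a b.
Proof.
  intros Hg. apply (@ex_RInt_continuous R_CompleteNormedModule). intros u Hu.
  apply continuous_comp_graph; [apply H_continuous | apply Hg, Hu].
Qed.

Let RInt_comp_diff_le (g1 g2 : R -> R) t c :
  ex_RInt (fun u => H (g1 u) u) 0 t -> ex_RInt (fun u => H (g2 u) u) 0 t ->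
  (forall u, Rmin 0 t <= u <= Rmax 0 t -> Rabs (g1 u - g2 u) <= c) ->
  Rabs (RInt (fun u => H (g1 u) u) 0 t - RInt (fun u => H (g2 u) u) 0 t) <= Rabs t * (L * c).
Proof.
  intros I1 I2 Hc.
  rewrite <- (@RInt_minus R_CompleteNormedModule) by assumption.
  replace (Rabs t) with (Rabs (t - 0)) by (rewrite Rminus_0_r; reflexivity).
  apply (norm_RInt_le_const_abs (fun u => H (g1 u) u - H (g2 u) u)).
  - intros u Hu. eapply Rle_trans; [apply H_lipschitz |].
    apply Rmult_le_compat_l; [exact L_nonneg | apply Hc, Hu].
  - apply (@RInt_correct R_CompleteNormedModule).
    apply (@ex_RInt_minus R_CompleteNormedModule); assumption.
Qed.

Fixpoint picard (n : nat) : R -> R :=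
  match n with
  | O => fun _ => 0
  | S n => fun t => RInt (fun u => H (picard n u) u) 0 t
  end.

Lemma picard_0 n : picard n 0 = 0.
Proof. destruct n; [reflexivity |]. apply (@RInt_point R_CompleteNormedModule). Qed.

Lemma picard_lipschitz n t1 t2 : Rabs (picard n t1 - picard n t2) <= M * Rabs (t1 - t2).
Proof.
  revert t1 t2. induction n as [|n IH]; intros t1 t2; simpl.
  - rewrite Rminus_eq_0, Rabs_R0. apply Rmult_le_pos; [exact M_nonneg | apply Rabs_pos].
  - assert (Hint : forall a b, ex_RInt (fun u => H (picard n u) u) a b).
    { intros a b. apply ex_RInt_comp. intros u _.
      apply (continuous_of_lipschitz_near _ M 1); [lra |]. intros; apply IH. }
    rewrite RInt_sub_0 by apply Hint.
    rewrite <- norm_R, Rmult_comm.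
    apply (norm_RInt_le_const_abs (fun u => H (picard n u) u) t2 t1).
    + intros u _. apply H_bounded.
    + apply (@RInt_correct R_CompleteNormedModule), Hint.
Qed.

Lemma ex_RInt_picard n a b : ex_RInt (fun u => H (picard n u) u) a b.
Proof.
  apply ex_RInt_comp. intros u _.
  apply (continuous_of_lipschitz_near _ M 1); [lra |]. intros; apply picard_lipschitz.
Qed.

Lemma picard_step n t : Rabs t <= s ->
  Rabs (picard (S n) t - picard n t) <= M * s * (/2)^n.
Proof.
  revert t. induction n as [|n IH]; intros t Ht.
  - replace (picard 0 t) with (picard 1 0) by (rewrite picard_0; reflexivity).
    eapply Rle_trans; [apply picard_lipschitz |].
    rewrite Rminus_0_r, pow_O, Rmult_1_r. apply Rmult_le_compat_l; [exact M_nonneg | exact Ht].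
  - eapply Rle_trans.
    { apply (RInt_comp_diff_le (picard (S n)) (picard n)); [apply ex_RInt_picard.. |].
      intros u Hu. apply IH. apply (Rabs_le_segment 0 t); [exact Hu | | exact Ht].
      rewrite Rabs_R0; lra. }
    assert (0 <= M * s * (/2)^n)
      by (apply Rmult_le_pos; [apply Rmult_le_pos | apply pow_le]; lra).
    assert (Rabs t * L <= / 2)
      by (eapply Rle_trans; [| exact Ls_le]; rewrite (Rmult_comm L);
          apply Rmult_le_compat_r; lra).
    replace (M * s * (/ 2) ^ S n) with (/ 2 * (M * s * (/ 2) ^ n)) by (simpl; ring).
    rewrite <- Rmult_assoc. apply Rmult_le_compat_r; assumption.
Qed.

Lemma picard_cauchy n m t : (n <= m)%nat -> Rabs t <= s ->
  Rabs (picard m t - picard n t) <= 2 * M * s * (/2)^n.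
Proof.
  intros Hnm Ht.
  enough (Rabs (picard m t - picard n t) <= 2 * M * s * ((/2)^n - (/2)^m)).
  { assert (0 <= (/2)^m) by (apply pow_le; lra).
    assert (0 <= 2 * M * s) by (apply Rmult_le_pos; [apply Rmult_le_pos |]; lra).
    eapply Rle_trans; [eassumption |]. apply Rmult_le_compat_l; lra. }
  induction Hnm as [|m Hnm IH].
  - rewrite !Rminus_eq_0, Rabs_R0. lra.
  - replace (picard (S m) t - picard n t)
      with ((picard (S m) t - picard m t) + (picard m t - picard n t)) by ring.
    eapply Rle_trans; [apply Rabs_triang |].
    pose proof (picard_step m t Ht). simpl pow. lra.
Qed.

Definition picard_lim (t : R) : R := real (Lim_seq (fun n => picard n t)).

Lemma picard_lim_error n t : Rabs t <= s ->
  Rabs (picard_lim t - picard n t) <= 2 * M * s * (/2)^n.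
Proof.
  intros Ht. apply (Lim_seq_half_pow_error (fun n => picard n t)).
  intros; apply picard_cauchy; assumption.
Qed.

Lemma picard_lim_0 : picard_lim 0 = 0.
Proof.
  apply Rabs_eq_0, Rle_antisym; [| apply Rabs_pos].
  apply (le_0_of_le_half_pow _ (2 * M * s)). intros n.
  pose proof (picard_lim_error n 0) as E. rewrite picard_0, Rminus_0_r in E.
  apply E. rewrite Rabs_R0; lra.
Qed.

Lemma picard_lim_lipschitz t1 t2 : Rabs t1 <= s -> Rabs t2 <= s ->
  Rabs (picard_lim t1 - picard_lim t2) <= M * Rabs (t1 - t2).
Proof.
  intros H1 H2.
  enough (Rabs (picard_lim t1 - picard_lim t2) - M * Rabs (t1 - t2) <= 0) by lra.
  apply (le_0_of_le_half_pow _ (4 * M * s)). intros n.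
  pose proof (picard_lim_error n t1 H1). pose proof (picard_lim_error n t2 H2).
  pose proof (picard_lipschitz n t1 t2).
  replace (picard_lim t1 - picard_lim t2) with ((picard_lim t1 - picard n t1)
    + ((picard n t1 - picard n t2) + - (picard_lim t2 - picard n t2))) by ring.
  eapply Rle_trans; [apply Rplus_le_compat_r, Rabs_triang |].
  eapply Rle_trans; [apply Rplus_le_compat_r, Rplus_le_compat_l, Rabs_triang |].
  rewrite Rabs_Ropp. lra.
Qed.

Lemma picard_lim_continuous t : Rabs t < s -> continuous picard_lim t.
Proof.
  intros Ht. apply (continuous_of_lipschitz_near _ M (s - Rabs t)); [lra |].
  intros t' Ht'. apply picard_lim_lipschitz; [| lra].
  pose proof (Rabs_triang_inv t' t). lra.
Qed.

Lemma ex_RInt_picard_lim t : Rabs t < s -> ex_RInt (fun u => H (picard_lim u) u) 0 t.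
Proof.
  intros Ht. apply ex_RInt_comp. intros u Hu. apply picard_lim_continuous.
  assert (Rabs u <= Rabs t)
    by (apply (Rabs_le_segment 0 t); [exact Hu | rewrite Rabs_R0; apply Rabs_pos | lra]).
  lra.
Qed.

Lemma picard_lim_fixpoint t : Rabs t < s ->
  picard_lim t = RInt (fun u => H (picard_lim u) u) 0 t.
Proof.
  intros Ht. apply Rminus_diag_uniq, Rabs_eq_0, Rle_antisym; [| apply Rabs_pos].
  apply (le_0_of_le_half_pow _ (2 * M * s)). intros n.
  assert (Hts : Rabs t <= s) by lra.
  assert (Herr : Rabs (picard_lim t - picard (S n) t) <= M * s * (/2)^n).
  { eapply Rle_trans; [apply picard_lim_error, Hts |]. right. simpl. field. }
  assert (Hint : Rabs (picard (S n) t - RInt (fun u => H (picard_lim u) u) 0 t)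
                 <= Rabs t * (L * (2 * M * s * (/2)^n))).
  { apply (RInt_comp_diff_le (picard n) picard_lim);
      [apply ex_RInt_picard | apply ex_RInt_picard_lim, Ht |].
    intros u Hu. rewrite Rabs_minus_sym. apply picard_lim_error.
    apply (Rabs_le_segment 0 t); [exact Hu | rewrite Rabs_R0 |]; lra. }
  assert (Hsmall : Rabs t * (L * (2 * M * s * (/2)^n)) <= M * s * (/2)^n).
  { assert (0 <= M * s * (/2)^n)
      by (apply Rmult_le_pos; [apply Rmult_le_pos | apply pow_le]; lra).
    assert (Rabs t * L <= / 2)
      by (eapply Rle_trans; [| exact Ls_le]; rewrite (Rmult_comm L);
          apply Rmult_le_compat_r; lra).
    replace (Rabs t * (L * (2 * M * s * (/2)^n)))
      with (Rabs t * L * 2 * (M * s * (/2)^n)) by ring.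
    replace (M * s * (/2)^n) with (/2 * 2 * (M * s * (/2)^n)) at 2 by field.
    apply Rmult_le_compat_r; lra. }
  replace (picard_lim t - RInt (fun u => H (picard_lim u) u) 0 t) with
    ((picard_lim t - picard (S n) t) + (picard (S n) t - RInt (fun u => H (picard_lim u) u) 0 t))
    by ring.
  eapply Rle_trans; [apply Rabs_triang |]. lra.
Qed.

Lemma picard_lim_derive t : Rabs t < s -> is_derive picard_lim t (H (picard_lim t) t).
Proof.
  intros Ht. apply (is_derive_RInt (fun u => H (picard_lim u) u) picard_lim 0 t).
  - assert (Hr : 0 < s - Rabs t) by lra.
    exists (mkposreal _ Hr). intros u Hu. change (Rabs (u - t) < s - Rabs t) in Hu.
    assert (Hus : Rabs u < s) by (pose proof (Rabs_triang_inv u t); lra).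
    rewrite (picard_lim_fixpoint u Hus).
    apply (@RInt_correct R_CompleteNormedModule), ex_RInt_picard_lim, Hus.
  - apply continuous_comp_graph; [apply H_continuous | apply picard_lim_continuous, Ht].
Qed.

End Picard.

Theorem ode_solution_exists (H : R -> R -> R) (M L s : R) :
  0 < s -> L * s <= / 2 ->
  (forall x t, Rabs (H x t) <= M) ->
  (forall x1 x2 t, Rabs (H x1 t - H x2 t) <= L * Rabs (x1 - x2)) ->
  (forall x t, continuity_2d_pt H x t) ->
  exists X : R -> R, X 0 = 0 /\
    (forall t, Rabs t <= s -> Rabs (X t) <= M * Rabs t) /\
    (forall t, Rabs t < s -> is_derive X t (H (X t) t)).
Proof.
  intros Hs HLs Hbd Hlip Hcont. exists (picard_lim H).
  pose proof (picard_lim_0 H M L s Hs HLs Hbd Hlip Hcont) as X0.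
  split; [exact X0 | split].
  - intros t Ht.
    assert (H0s : Rabs 0 <= s) by (rewrite Rabs_R0; lra).
    pose proof (picard_lim_lipschitz H M L s Hs HLs Hbd Hlip Hcont t 0 Ht H0s) as E.
    rewrite X0, !Rminus_0_r in E. exact E.
  - apply (picard_lim_derive H M L s); assumption.
Qed.

Lemma gronwall_zero (b k : R -> R) s K : b 0 = 0 ->
  (forall t, 0 <= t < s -> is_derive b t (b t * k t)) ->
  (forall t, 0 <= t < s -> k t <= K) ->
  forall t, 0 <= t < s -> b t = 0.
Proof.
  intros Hb0 Hb Hk t Ht.
  set (w := fun z => b z ^ 2 * exp (- (2 * K) * z)).
  set (dw := fun z => 2 * b z ^ 2 * exp (- (2 * K) * z) * (k z - K)).
  assert (Hw : forall z, 0 <= z < s -> is_derive w z (dw z)).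
  { intros z Hz. pose proof (Hb z Hz) as Hbz.
    unfold w, dw. auto_derive; [eexists; exact Hbz |].
    change (fun x => b x) with b. rewrite (is_derive_unique _ _ _ Hbz). ring. }
  destruct (MVT_gen w 0 t dw) as [c [Hc Hwt]].
  - rewrite Rmin_left, Rmax_right by lra. intros z Hz. apply Hw. lra.
  - rewrite Rmin_left, Rmax_right by lra. intros z Hz.
    apply continuity_pt_filterlim, (ex_derive_continuous w). eexists. apply Hw. lra.
  - rewrite Rmin_left, Rmax_right in Hc by lra.
    assert (Hdw : dw c <= 0).
    { unfold dw. pose proof (Hk c (conj (proj1 Hc) (Rle_lt_trans _ _ _ (proj2 Hc) (proj2 Ht)))).
      pose proof (pow2_ge_0 (b c)). pose proof (exp_pos (- (2 * K) * c)).
      assert (0 <= 2 * b c ^ 2 * exp (- (2 * K) * c)) by (apply Rmult_le_pos; lra).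
      nra. }
    assert (Hw0 : w 0 = 0) by (unfold w; rewrite Hb0; ring).
    assert (Hwt_le : w t <= 0) by nra.
    unfold w in Hwt_le. pose proof (exp_pos (- (2 * K) * t)).
    assert (b t ^ 2 = 0) by (pose proof (pow2_ge_0 (b t)); nra).
    destruct (Req_dec (b t) 0) as [| Hne]; [assumption |].
    exfalso. now apply (pow_nonzero _ 2) in Hne.
Qed.

Lemma differentiable_pt_lim_of_C2 (g : R -> R -> R) x y :
  locally_2d (ex_diff_n g 2) x y -> differentiable_pt_lim g x y (dx g x y) (dy g x y).
Proof.
  intros Hg eps. destruct (Taylor_Lagrange_2d g 1 x y Hg) as [D HD].
  assert (HD1 : 0 < Rabs D + 1) by (pose proof (Rabs_pos D); lra).
  assert (Hr : 0 < eps / (Rabs D + 1)) by (apply Rdiv_lt_0_compat; [apply cond_pos | exact HD1]).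
  apply locally_2d_impl with (2 := HD). exists (mkposreal _ Hr). simpl.
  intros u v Hu Hv Htaylor.
  replace (g u v - g x y - (dx g x y * (u - x) + dy g x y * (v - y)))
    with (g u v - DL_pol 1 g x y (u - x) (v - y))
    by (unfold DL_pol, differential, partial_derive, Binomial.C, dx, dy; simpl; field).
  set (r := Rmax (Rabs (u - x)) (Rabs (v - y))) in *.
  assert (Hr0 : 0 <= r) by (unfold r; eapply Rle_trans; [apply Rabs_pos | apply Rmax_l]).
  assert (Hreps : (Rabs D + 1) * r < eps)
    by (apply Rmult_lt_of_lt_div, Rmax_lub_lt; assumption).
  eapply Rle_trans; [exact Htaylor |].
  pose proof (RRle_abs D). nra.
Qed.

Lemma locally_2d_square d x y : Rabs x < d -> Rabs y < d ->
  locally_2d (fun u v => Rabs u < d /\ Rabs v < d) x y.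
Proof.
  intros Hx Hy. assert (Hr : 0 < d - Rmax (Rabs x) (Rabs y)).
  { pose proof (Rmax_lub_lt _ _ _ Hx Hy). lra. }
  exists (mkposreal _ Hr). simpl. intros u v Hu Hv.
  pose proof (Rmax_l (Rabs x) (Rabs y)). pose proof (Rmax_r (Rabs x) (Rabs y)).
  pose proof (Rabs_triang_inv u x). pose proof (Rabs_triang_inv v y). lra.
Qed.

Lemma locally_2d_Rabs_le (g : R -> R -> R) x y K :
  continuity_2d_pt g x y -> Rabs (g x y) < K -> locally_2d (fun u v => Rabs (g u v) <= K) x y.
Proof.
  intros Hg HK. assert (He : 0 < K - Rabs (g x y)) by lra.
  apply locally_2d_impl with (2 := Hg (mkposreal _ He)), locally_2d_forall.
  intros u v Huv. simpl in Huv. pose proof (Rabs_triang_inv (g u v) (g x y)). lra.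
Qed.

Lemma lipschitz_of_derive_bounded (g dg : R -> R) a b K :
  (forall z, Rmin a b <= z <= Rmax a b -> is_derive g z (dg z)) ->
  (forall z, Rmin a b <= z <= Rmax a b -> Rabs (dg z) <= K) ->
  Rabs (g b - g a) <= K * Rabs (b - a).
Proof.
  intros Hg Hdg. destruct (MVT_gen g a b dg) as [c [Hc ->]].
  - intros z Hz. apply Hg. lra.
  - intros z Hz. apply continuity_pt_filterlim, (ex_derive_continuous g).
    eexists. apply Hg, Hz.
  - rewrite Rabs_mult. apply Rmult_le_compat_r; [apply Rabs_pos | apply Hdg, Hc].
Qed.

Definition clip (r z : R) : R := Rmax (- r) (Rmin r z).

Lemma clip_lipschitz r z w : Rabs (clip r z - clip r w) <= Rabs (z - w).
Proof.
  unfold clip, Rmax, Rmin.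
  repeat destruct Rle_dec; unfold Rabs; repeat destruct Rcase_abs; lra.
Qed.

Lemma clip_id r z : Rabs z <= r -> clip r z = z.
Proof.
  intros Hz. apply Rabs_le_between in Hz. unfold clip, Rmax, Rmin.
  repeat destruct Rle_dec; lra.
Qed.

Lemma Rabs_clip_le r z : 0 <= r -> Rabs (clip r z) <= r.
Proof.
  intros Hr. unfold clip, Rmax, Rmin.
  repeat destruct Rle_dec; unfold Rabs; repeat destruct Rcase_abs; lra.
Qed.

Lemma continuity_2d_pt_clip (g : R -> R -> R) r x y :
  continuity_2d_pt g (clip r x) (clip r y) ->
  continuity_2d_pt (fun u v => g (clip r u) (clip r v)) x y.
Proof.
  intros Hg eps. destruct (Hg eps) as [e He]. exists e. intros u v Hu Hv.
  apply He; eapply Rle_lt_trans; try apply clip_lipschitz; assumption.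
Qed.

(* The derivative of B_F along (P / Q, 1), in the shape produced by the chain rule. *)
Lemma BF_derivative_identity (P Q Pxx Pxy Qyy ph : R) : Q <> 0 ->
  (1 - P^2) * Qyy + 2 * P * Q * Pxy + (1 - Q^2) * Pxx = ph * (1 - P^2 - Q^2)^2 ->
  -(2 * P * (Pxx * (P / Q) + Pxy * 1) + 2 * Q * (Pxy * (P / Q) + Qyy * 1)) =
  (1 - P^2 - Q^2) * (-(2 / Q) * (ph * (1 - P^2 - Q^2) - (Qyy + Pxx))).
Proof.
  intros HQ HA. apply Rminus_diag_uniq.
  transitivity (-(2 / Q) * ((1 - P^2) * Qyy + 2 * P * Q * Pxy + (1 - Q^2) * Pxx
                            - ph * (1 - P^2 - Q^2)^2)); [field; exact HQ |].
  rewrite HA. ring.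
Qed.

Lemma Rabs_quotient_rule_le (P Q Px Qx K : R) :
  Rabs P < /4 -> Rabs (Q - 1) < /4 -> Rabs Px <= K -> Rabs Qx <= K ->
  Rabs ((Px * Q - P * Qx) / Q ^ 2) <= 3 * K.
Proof.
  intros HP HQ HPx HQx. apply Rabs_def2 in HQ.
  assert (HK : 0 <= K) by (eapply Rle_trans; [apply Rabs_pos | exact HPx]).
  assert (HQ2 : 9/16 <= Q ^ 2) by nra.
  unfold Rdiv. rewrite Rabs_mult, Rabs_inv, (Rabs_pos_eq (Q ^ 2)) by lra.
  apply (Rmult_le_reg_r (Q ^ 2)); [lra |].
  rewrite Rmult_assoc, Rinv_l, Rmult_1_r by lra.
  assert (Rabs (Px * Q - P * Qx) <= K * (5/4) + /4 * K).
  { unfold Rminus. eapply Rle_trans; [apply Rabs_triang |].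
    rewrite Rabs_Ropp, !Rabs_mult, (Rabs_pos_eq Q) by lra.
    apply Rplus_le_compat; [apply Rmult_le_compat; try lra; apply Rabs_pos |].
    apply Rmult_le_compat; try lra; apply Rabs_pos. }
  nra.
Qed.

Lemma is_derive_one_minus_squares (p q : R -> R) t dp dq :
  is_derive p t dp -> is_derive q t dq ->
  is_derive (fun u => 1 - p u ^ 2 - q u ^ 2) t (-(2 * p t * dp + 2 * q t * dq)).
Proof.
  intros Hp Hq. auto_derive; [repeat split; eexists; eassumption |].
  change (fun x => p x) with p. change (fun x => q x) with q.
  rewrite (is_derive_unique _ _ _ Hp), (is_derive_unique _ _ _ Hq). ring.
Qed.

(* On a square where this holds, f_y > 3/4; hence f_x / f_y is bounded by 1 and
   3C-Lipschitz in x there, and |B_F| <= 1. *)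
Definition controlled (f phi : R -> R -> R) (C x y : R) : Prop :=
  Rabs (dx f x y) < /4 /\ Rabs (dy f x y - 1) < /4 /\
  Rabs (dx (dx f) x y) <= C /\ Rabs (dx (dy f) x y) <= C /\
  Rabs (dy (dy f) x y) <= C /\ Rabs (phi x y) <= C.

Section CharacteristicCurve.

Variables f phi : R -> R -> R.
Variables d C : R.
Hypothesis d_pos : 0 < d.
Hypothesis f_C3 : forall x y, Rabs x < d -> Rabs y < d -> ex_diff_n f 3 x y.
Hypothesis AF_BF : forall x y, Rabs x < d -> Rabs y < d -> AF f x y = phi x y * BF f x y ^ 2.
Hypothesis f_controlled : forall x y, Rabs x < d -> Rabs y < d -> controlled f phi C x y.
Hypothesis lightlike_origin : BF f 0 0 = 0.

Let locally_C2 (g : R -> R -> R) x y : Rabs x < d -> Rabs y < d ->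
  (forall u v, ex_diff_n f 3 u v -> ex_diff_n g 2 u v) -> locally_2d (ex_diff_n g 2) x y.
Proof.
  intros Hx Hy Hg. apply locally_2d_impl with (2 := locally_2d_square d x y Hx Hy).
  apply locally_2d_forall. intros u v [Hu Hv]. apply Hg, f_C3; assumption.
Qed.

Lemma fx_differentiable x y : Rabs x < d -> Rabs y < d ->
  differentiable_pt_lim (dx f) x y (dx (dx f) x y) (dy (dx f) x y).
Proof.
  intros Hx Hy. apply differentiable_pt_lim_of_C2, locally_C2; try assumption.
  apply ex_diff_n_deriv_aux1.
Qed.

Lemma fy_differentiable x y : Rabs x < d -> Rabs y < d ->
  differentiable_pt_lim (dy f) x y (dx (dy f) x y) (dy (dy f) x y).
Proof.
  intros Hx Hy. apply differentiable_pt_lim_of_C2, locally_C2; try assumption.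
  apply ex_diff_n_deriv_aux2.
Qed.

Lemma f_mixed_partials x y : Rabs x < d -> Rabs y < d -> dx (dy f) x y = dy (dx f) x y.
Proof.
  intros Hx Hy. apply (Derive_partial_derive_aux1 1 f x y), locally_C2; try assumption.
  intros u v. apply ex_diff_n_m; lia.
Qed.

Let fy_pos x y : Rabs x < d -> Rabs y < d -> 3/4 < dy f x y.
Proof.
  intros Hx Hy. destruct (f_controlled x y Hx Hy) as [_ [Hfy _]].
  apply Rabs_def2 in Hfy. lra.
Qed.

Definition slope (x y : R) : R := dx f x y / dy f x y.

Lemma Rabs_slope_le x y : Rabs x < d -> Rabs y < d -> Rabs (slope x y) <= 1.
Proof.
  intros Hx Hy. pose proof (fy_pos x y Hx Hy) as Hfy.
  destruct (f_controlled x y Hx Hy) as [Hfx _].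
  unfold slope, Rdiv. rewrite Rabs_mult, Rabs_inv, (Rabs_pos_eq (dy f x y)) by lra.
  apply (Rmult_le_reg_r (dy f x y)); [lra |].
  rewrite Rmult_assoc, Rinv_l, Rmult_1_r, Rmult_1_l by lra. lra.
Qed.

Lemma slope_continuous x y : Rabs x < d -> Rabs y < d -> continuity_2d_pt slope x y.
Proof.
  intros Hx Hy. pose proof (f_C3 x y Hx Hy) as Hf.
  apply continuity_2d_pt_mult.
  - exact (proj1 (ex_diff_n_deriv_aux1 f 2 x y Hf)).
  - apply continuity_2d_pt_inv; [exact (proj1 (ex_diff_n_deriv_aux2 f 2 x y Hf)) |].
    pose proof (fy_pos x y Hx Hy). lra.
Qed.

Lemma slope_lipschitz x1 x2 y : Rabs x1 < d -> Rabs x2 < d -> Rabs y < d ->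
  Rabs (slope x1 y - slope x2 y) <= 3 * C * Rabs (x1 - x2).
Proof.
  intros Hx1 Hx2 Hy.
  apply (lipschitz_of_derive_bounded (fun z => slope z y)
    (fun z => (dx (dx f) z y * dy f z y - dx f z y * dx (dy f) z y) / dy f z y ^ 2)).
  - intros z Hz. assert (Hzd : Rabs z < d) by (apply (Rabs_lt_segment x2 x1); assumption).
    apply (is_derive_div (fun w => dx f w y) (fun w => dy f w y)).
    + apply Derive_correct. exact (proj1 (proj2 (ex_diff_n_deriv_aux1 f 2 z y (f_C3 z y Hzd Hy)))).
    + apply Derive_correct. exact (proj1 (proj2 (ex_diff_n_deriv_aux2 f 2 z y (f_C3 z y Hzd Hy)))).
    + pose proof (fy_pos z y Hzd Hy). lra.
  - intros z Hz. assert (Hzd : Rabs z < d) by (apply (Rabs_lt_segment x2 x1); assumption).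
    destruct (f_controlled z y Hzd Hy) as [Hfx [Hfy [Hfxx [Hfyx _]]]].
    apply Rabs_quotient_rule_le; assumption.
Qed.

Definition BF_rate (x y : R) : R :=
  -(2 / dy f x y) * (phi x y * BF f x y - (dy (dy f) x y + dx (dx f) x y)).

Lemma BF_rate_le x y : Rabs x < d -> Rabs y < d -> BF_rate x y <= 9 * C.
Proof.
  intros Hx Hy. destruct (f_controlled x y Hx Hy) as [HP [HQ [Hfxx [_ [Hfyy Hphi]]]]].
  unfold BF_rate, BF.
  set (P := dx f x y) in *. set (Q := dy f x y) in *.
  apply Rabs_def2 in HP. apply Rabs_def2 in HQ.
  assert (HC : 0 <= C) by (eapply Rle_trans; [apply Rabs_pos | exact Hphi]).
  assert (HB : Rabs (1 - P^2 - Q^2) <= 1) by (apply Rabs_le; nra).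
  assert (Hw : Rabs (phi x y * (1 - P^2 - Q^2) - (dy (dy f) x y + dx (dx f) x y)) <= 3 * C).
  { unfold Rminus at 1. eapply Rle_trans; [apply Rabs_triang |].
    rewrite Rabs_Ropp, Rabs_mult.
    pose proof (Rabs_triang (dy (dy f) x y) (dx (dx f) x y)). pose proof (Rabs_pos (phi x y)).
    nra. }
  assert (HQinv : 0 < 2 / Q < 3).
  { split; [apply Rdiv_lt_0_compat; lra |].
    apply (Rmult_lt_reg_r Q); [lra |]. unfold Rdiv. rewrite Rmult_assoc, Rinv_l; lra. }
  apply Rabs_le_between in Hw.
  apply Rle_trans with (2 / Q * (3 * C)); nra.
Qed.

Lemma BF_derive_along (X : R -> R) t : Rabs (X t) < d -> Rabs t < d ->
  is_derive X t (slope (X t) t) ->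
  is_derive (fun u => BF f (X u) u) t (BF f (X t) t * BF_rate (X t) t).
Proof.
  intros Hx Ht HX. apply is_derive_Reals in HX.
  assert (HP : is_derive (fun u => dx f (X u) u) t
                 (dx (dx f) (X t) t * slope (X t) t + dy (dx f) (X t) t * 1)).
  { apply is_derive_Reals, (derivable_pt_lim_comp_2d (dx f) X (fun u => u));
      [apply fx_differentiable; assumption | exact HX | apply derivable_pt_lim_id]. }
  assert (HQ : is_derive (fun u => dy f (X u) u) t
                 (dy (dx f) (X t) t * slope (X t) t + dy (dy f) (X t) t * 1)).
  { rewrite <- f_mixed_partials by assumption.
    apply is_derive_Reals, (derivable_pt_lim_comp_2d (dy f) X (fun u => u));
      [apply fy_differentiable; assumption | exact HX | apply derivable_pt_lim_id]. }
  assert (HB := is_derive_one_minus_squares _ _ t _ _ HP HQ).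
  unfold BF_rate, BF, slope in *.
  rewrite <- (BF_derivative_identity _ _ _ (dy (dx f) (X t) t)); [exact HB | |].
  - pose proof (fy_pos _ _ Hx Ht). lra.
  - specialize (AF_BF _ _ Hx Ht). unfold AF, BF in AF_BF. exact AF_BF.
Qed.

Lemma lightlike_curve : exists s, 0 < s < d /\
  exists X : R -> R, forall t, 0 <= t < s -> Rabs (X t) <= t /\ BF f (X t) t = 0.
Proof.
  set (a := d / 2).
  assert (Ha : 0 < a < d) by (unfold a; lra).
  assert (HC : 0 <= C).
  { assert (H0 : Rabs 0 < d) by (rewrite Rabs_R0; exact d_pos).
    destruct (f_controlled 0 0 H0 H0) as [_ [_ [HC _]]].
    eapply Rle_trans; [apply Rabs_pos | exact HC]. }
  assert (Hclip : forall z, Rabs (clip a z) < d).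
  { intros z. pose proof (Rabs_clip_le a z). lra. }
  (* Along the solution, which stays in the square [-a, a]^2, clipping changes nothing. *)
  set (H := fun x t => slope (clip a x) (clip a t)).
  set (s := Rmin a (/ (2 * (3 * C + 1)))).
  assert (Hs : 0 < s) by (apply Rmin_pos; [lra | apply Rinv_0_lt_compat; lra]).
  assert (HLs : 3 * C * s <= / 2).
  { apply Rle_trans with (3 * C * / (2 * (3 * C + 1))).
    - apply Rmult_le_compat_l; [lra | apply Rmin_r].
    - apply (Rmult_le_reg_r (2 * (3 * C + 1))); [lra |].
      rewrite Rmult_assoc, Rinv_l by lra. field_simplify; lra. }
  destruct (ode_solution_exists H 1 (3 * C) s Hs HLs) as [X [X0 [Xle Xder]]].
  - intros x t. apply Rabs_slope_le; apply Hclip.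
  - intros x1 x2 t. eapply Rle_trans; [apply slope_lipschitz; apply Hclip |].
    apply Rmult_le_compat_l; [lra | apply clip_lipschitz].
  - intros x t. apply continuity_2d_pt_clip, slope_continuous; apply Hclip.
  - assert (Hs_le : s <= a) by apply Rmin_l.
    exists s. split; [lra |]. exists X.
    assert (HX : forall t, 0 <= t < s -> Rabs (X t) <= t).
    { intros t Ht. rewrite <- (Rabs_pos_eq t) at 2 by lra. rewrite <- (Rmult_1_l (Rabs t)).
      apply Xle. rewrite Rabs_pos_eq; lra. }
    intros t Ht. split; [apply HX, Ht |].
    apply (gronwall_zero (fun u => BF f (X u) u) (fun u => BF_rate (X u) u) s (9 * C));
      [rewrite X0; exact lightlike_origin | | | exact Ht].
    + intros u Hu. pose proof (HX u Hu).
      assert (Hu' : Rabs u < s) by (rewrite Rabs_pos_eq; lra).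
      apply BF_derive_along; [lra | rewrite Rabs_pos_eq; lra |].
      pose proof (Xder u Hu') as Hd. unfold H in Hd.
      rewrite (clip_id a (X u)), (clip_id a u) in Hd; [exact Hd | lra | lra].
    + intros u Hu. pose proof (HX u Hu).
      apply BF_rate_le; [lra | rewrite Rabs_pos_eq; lra].
Qed.

End CharacteristicCurve.

Lemma controlled_near_origin (f phi : R -> R -> R) :
  ex_diff_n f 3 0 0 -> continuity_2d_pt phi 0 0 -> dx f 0 0 = 0 -> dy f 0 0 = 1 ->
  exists C, locally_2d (controlled f phi C) 0 0.
Proof.
  intros Hf Hphi fx0 fy0.
  pose proof (ex_diff_n_deriv_aux1 f 2 0 0 Hf) as Hfx.
  pose proof (ex_diff_n_deriv_aux2 f 2 0 0 Hf) as Hfy.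
  assert (Hq : 0 < /4) by lra.
  pose proof (Rabs_pos (dx (dx f) 0 0)). pose proof (Rabs_pos (dx (dy f) 0 0)).
  pose proof (Rabs_pos (dy (dy f) 0 0)). pose proof (Rabs_pos (phi 0 0)).
  exists (Rabs (dx (dx f) 0 0) + Rabs (dx (dy f) 0 0) + Rabs (dy (dy f) 0 0)
          + Rabs (phi 0 0) + 1).
  repeat apply locally_2d_and.
  - assert (Hnear : locally_2d (fun u v => Rabs (dx f u v - dx f 0 0) < /4) 0 0)
      by exact (proj1 Hfx (mkposreal _ Hq)).
    rewrite fx0 in Hnear. apply locally_2d_impl with (2 := Hnear), locally_2d_forall.
    intros u v. rewrite Rminus_0_r. auto.
  - rewrite <- fy0. exact (proj1 Hfy (mkposreal _ Hq)).
  - apply locally_2d_Rabs_le; [exact (proj1 (ex_diff_n_deriv_aux1 _ 1 _ _ Hfx)) | lra].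
  - apply locally_2d_Rabs_le; [exact (proj1 (ex_diff_n_deriv_aux1 _ 1 _ _ Hfy)) | lra].
  - apply locally_2d_Rabs_le; [exact (proj1 (ex_diff_n_deriv_aux2 _ 1 _ _ Hfy)) | lra].
  - apply locally_2d_Rabs_le; [exact Hphi | lra].
Qed.

Theorem corollary3p4 (f : R -> R -> R) (U : R -> R -> Prop) :
  open2 U -> U 0 0 ->
  Ck_on 3 f U ->
  f 0 0 = 0 -> dx f 0 0 = 0 -> dy f 0 0 = 1 ->
  open_in2 U (fun x y => BF f x y <> 0) ->
  dense_in2 U (fun x y => BF f x y <> 0) ->
  (exists phi : R -> R -> R, Ck_on 1 phi U /\
     forall x y, U x y -> AF f x y - phi x y * (BF f x y)^2 = 0) ->
  forall eps, 0 < eps -> exists x y,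
    U x y /\ (x <> 0 \/ y <> 0) /\ Rabs x < eps /\ Rabs y < eps /\ BF f x y = 0.
Proof.
  intros HU U0 Hf _ fx0 fy0 _ _ [phi [Hphi HA]] eps Heps.
  destruct (controlled_near_origin f phi (Hf 0 0 U0) (proj1 (Hphi 0 0 U0)) fx0 fy0)
    as [C HC].
  assert (HU0 : locally_2d U 0 0).
  { destruct (HU 0 0 U0) as [e [He HUe]]. exists (mkposreal e He). exact HUe. }
  destruct (locally_2d_and _ _ _ _ HU0 HC) as [d Hd].
  assert (Hbox : forall x y, Rabs x < d -> Rabs y < d -> U x y /\ controlled f phi C x y)
    by (intros x y Hx Hy; apply Hd; rewrite Rminus_0_r; assumption).
  destruct (lightlike_curve f phi d C (cond_pos d)) as [s [Hs [X HX]]].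
  - intros x y Hx Hy. apply Hf, Hbox; assumption.
  - intros x y Hx Hy. apply Rminus_diag_uniq, HA, Hbox; assumption.
  - intros x y Hx Hy. apply Hbox; assumption.
  - unfold BF. rewrite fx0, fy0. ring.
  - set (t := Rmin (s / 2) (eps / 2)).
    assert (Ht : 0 < t <= s / 2 /\ t <= eps / 2)
      by (split; [split; [apply Rmin_pos | apply Rmin_l] | apply Rmin_r]; lra).
    destruct (HX t) as [HXt HBt]; [lra |].
    destruct (Hbox (X t) t) as [HUt _]; [lra | rewrite Rabs_pos_eq; lra |].
    exists (X t), t. rewrite (Rabs_pos_eq t) by lra.
    repeat split; [exact HUt | right; lra | lra | lra | exact HBt].
Qed.
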